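(* Fix a set $\mathscr{G}$ of elementary operations, each $g\in\mathscr{G}$ equipped with a general type scheme $\mathrm{scheme}(g)=(\Delta,T,U)$ as described in the context, and consider resource-aware circuit signatures (RACSs) derived by the rules in the context. Then: (1) (Gate count.) Let $\mathfrak{c}$ be the CMI with $\mathrm{id}_{\mathfrak{c}}(W)=0$ for every multiset $W$ of wire types, $\mathrm{append}^{g}_{\mathfrak{c}}(n,l,h,k)=n+1$ for all $g\in\mathscr{G}$, and $\mathrm{gate}^{g,n}_{\mathfrak{c}}$ an arbitrary constant function for each $g,n$. Whenever $\Xi\vdash_{\mathfrak{c}} Q\to\mathcal{C}\to L;I$ is derivable, we have $\operatorname{gatecount}(\mathcal{C})\le \llbracket I\rrbracket_{\mathfrak{c}}$ (for every assignment of natural numbers to the index variables). (2) (Width.) Let $\mathfrak{c}$ be the CMI with $\mathrm{id}_{\mathfrak{c}}(W)=|W|$ (the cardinality of the multiset), $\mathrm{append}^{g}_{\mathfrak{c}}(n,l,h,k)=n+\max(0,k+l-n)$ for all $g\in\mathscr{G}$, and $\mathrm{gate}^{g,n}_{\mathfrak{c}}$ an arbitrary constant function for each $g,n$. Whenever $\Xi\vdash_{\mathfrak{c}} Q\to\mathcal{C}\to L;I$ is derivable, we have $\operatorname{width}(\mathcal{C})\le \llbracket I\rrbracket_{\mathfrak{c}}$ (for every assignment of natural numbers to the index variables). (3) (Depth.) Let $\mathfrak{c}$ be the CMI with $\mathrm{gate}^{g,i}_{\mathfrak{c}}(n_1,\dots,n_k)=\max(n_1,\dots,n_k)+1$ for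 all $g\in\mathscr{G}$ and all output positions $i$, and $\mathrm{id}_{\mathfrak{c}}$, $\mathrm{append}^{g}_{\mathfrak{c}}$ arbitrary constant functions. Whenever $\Xi\vdash_{\mathfrak{c}} (\ell_1:w_1^{i_1},\dots,\ell_n:w_n^{i_n})\to\mathcal{C}\to(k_1:r_1^{I_1},\dots,k_m:r_m^{I_m});J$ is derivable, where $i_1,\dots,i_n$ are distinct index variables in $\Xi$, then for every $j\in\{1,\dots,m\}$ and every assignment $\rho$ of natural numbers to the variables of $\Xi$ we have $\operatorname{depth}(\mathcal{C})(f_\rho)(k_j)\le \llbracket I_j\rrbracket_{\mathfrak{c},\rho}$, where $f_\rho(\ell_h)=\rho(i_h)$ for $h\in\{1,\dots,n\}$.
   Context: Wire types are $\mathsf{Bit}$ and $\mathsf{Qubit}$; $\mathscr{L}$ is an infinite set of labels (wire names). Wire bundles: $\vec\ell::= * \mid \ell \mid \langle\vec\ell,\vec k\rangle$ with $\ell\in\mathscr{L}$; $\mathit{FL}(\vec\ell)$ is the set of labels occurring in $\vec\ell$ and $|\vec\ell|$ its number. Circuits (CRL): $\mathcal{C}::=\mathrm{id}_Q\mid \mathcal{C};g(\vec\ell)\to\vec k$ with $g\in\mathscr{G}$. The outputs of a circuit: $\mathrm{out}(\mathrm{id}_Q)=\mathrm{dom}(Q)$, $\mathrm{out}(\mathcal{C};g(\vec\ell)\to\vec k)=(\mathrm{out}(\mathcal{C})\setminus\mathit{FL}(\vec\ell))\cup\mathit{FL}(\vec k)$. Indices: $I,J::= n\mid i\mid I+J\mid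 I-J\mid I\cdot J\mid \max(I,J)\mid \mathrm{id}_W\mid \mathrm{append}_g(I,J,E,F)\mid g_n(I_1,\dots,I_m)$, with $n\in\mathbb{N}$, $i$ an index variable, $W$ a finite multiset of wire types, $g\in\mathscr{G}$. A circuit metric interpretation (CMI) $\mathfrak{c}$ is a triple of families of functions $\mathrm{id}_{\mathfrak{c}}(W)\in\mathbb{N}$, $\mathrm{append}^g_{\mathfrak{c}}:\mathbb{N}^4\to\mathbb{N}$, $\mathrm{gate}^{g,n}_{\mathfrak{c}}:\mathbb{N}^{k}\to\mathbb{N}$ ($k$ the number of inputs of $g$); $\llbracket I\rrbracket_{\mathfrak{c},\rho}$ is the evaluation of $I$ under assignment $\rho$ of naturals to variables, with arithmetic operators standard ($-$ truncated at $0$) and the abstract operators $\mathrm{id}_W,\mathrm{append}_g,g_n$ interpreted by $\mathfrak{c}$. $\Xi\vDash_{\mathfrak{c}} I=J$ (resp. $\le$) means equality (resp. $\le$) of evaluations for every assignment to the variables in the set $\Xi$. A label context $Q$ is a finite map from labels to annotated wire types $w^I$; $Q,L$ denotes union of contexts with disjoint domains; $\{Q\}$ denotes the multiset of (unannotated) wire types in the codomain of $Q$, and as an index $\{Q\}$ abbreviates $\mathrm{id}_{\{Q\}}$. $\Xi\vdash Q$ means all index variables in $Q$ belong to $\Xi$. Bundle types $T::=\mathbbm{1}\mid w^I\mid T\otimes U$. Each $g\in\mathscr{G}$ has a scheme $(\Delta,T,U)$ with $\Delta=\{i_1,\dots,i_n\}$ index variables, $T=w_1^{i_1}\otimes\dots\otimes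 w_n^{i_n}$, $U=r_1^{g_1(i_1,\dots,i_n)}\otimes\dots\otimes r_m^{g_m(i_1,\dots,i_n)}$. An index substitution $\delta\in\Xi\Rightarrow\Delta$ replaces each variable of $\Delta$ by an index whose variables lie in $\Xi$. Bundle judgments $\Xi;Q\vdash_{\mathfrak{c}}\vec\ell:T$: $\Xi;\emptyset\vdash *:\mathbbm{1}$; if $\Xi\vDash_{\mathfrak{c}}I=J$ then $\Xi;\ell:w^I\vdash\ell:w^J$; if $\Xi;Q_1\vdash\vec\ell:T$ and $\Xi;Q_2\vdash\vec k:U$ then $\Xi;Q_1,Q_2\vdash\langle\vec\ell,\vec k\rangle:T\otimes U$. RACS rules: (id) if $\Xi\vdash Q$ and $\vDash_{\mathfrak{c}}\{Q\}=I$ then $\Xi\vdash_{\mathfrak{c}}Q\to\mathrm{id}_Q\to Q;I$. (append) if $\Xi\vdash_{\mathfrak{c}}Q\to\mathcal{C}\to L,H;I$, $\vDash_{\mathfrak{c}}\mathrm{append}_g(I,\{L\},\{H\},\{K\})=J$, $\mathrm{scheme}(g)=(\Delta,T,U)$, $\delta\in\Xi\Rightarrow\Delta$, $\Xi;H\vdash_{\mathfrak{c}}\vec\ell:\delta(T)$ and $\Xi;K\vdash_{\mathfrak{c}}\vec k:\delta(U)$, then $\Xi\vdash_{\mathfrak{c}}Q\to(\mathcal{C};g(\vec\ell)\to\vec k)\to L,K;J$. Recursive metrics: $\operatorname{gatecount}(\mathrm{id}_Q)=0$, $\operatorname{gatecount}(\mathcal{C};g(\vec\ell)\to\vec k)=\operatorname{gatecount}(\mathcal{C})+1$.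 $\operatorname{width}(\mathrm{id}_Q)=|Q|$, $\operatorname{width}(\mathcal{C};g(\vec\ell)\to\vec k)=\operatorname{width}(\mathcal{C})+\max(0,(|\vec k|-|\vec\ell|)-\mathrm{discarded}(\mathcal{C}))$ where $\mathrm{discarded}(\mathcal{C})=\operatorname{width}(\mathcal{C})-|\mathrm{out}(\mathcal{C})|$. $\operatorname{depth}:(\mathscr{L}\to\mathbb{N})\to(\mathscr{L}\to\mathbb{N})$: $\operatorname{depth}(\mathrm{id}_Q)(in)(t)=in(t)$; $\operatorname{depth}(\mathcal{C};g(\vec\ell)\to\vec k)(in)(t)=\max\{\operatorname{depth}(\mathcal{C})(in)(\ell)\mid\ell\in\mathit{FL}(\vec\ell)\}+1$ if $t\in\mathit{FL}(\vec k)$, and $\operatorname{depth}(\mathcal{C})(in)(t)$ otherwise (with $\max\emptyset=0$). *)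

From Stdlib Require Import Permutation ZArith.
From mathcomp Require Import all_boot.

Set Implicit Arguments.
Unset Strict Implicit.
Unset Printing Implicit Defensive.

Inductive WT := Bit | Qubit.

Definition WT_eqb (a b : WT) : bool :=
  match a, b with Bit, Bit | Qubit, Qubit => true | _, _ => false end.

(* Shapes of bundle types appearing in gate type schemes:
   T = w_1^{i_1} (x) ... (x) w_n^{i_n}  (leaves numbered left to right). *)
Inductive gshape := SUnit | SWire (w : WT) | STensor (s1 s2 : gshape).

Fixpoint nleaves (s : gshape) : nat :=
  match s with SUnit => 0 | SWire _ => 1 | STensor a b => nleaves a + nleaves b end.

Section RACS.
Variable G : Type.
Variable gin gout : G -> gshape.  (* scheme(g) = (Delta, T, U) *)

(* Labels and index variables are natural numbers. A finite multiset W of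
   wire types is given by its numbers of Bits and Qubits. *)
Inductive Index :=
| INat (n : nat)
| IVar (i : nat)
| IAdd (I J : Index)
| ISub (I J : Index)
| IMul (I J : Index)
| IMax (I J : Index)
| IId (nbit nqubit : nat)
| IAppend (g : G) (I J E F : Index)
| IGate (g : G) (n : nat) (args : list Index).

Fixpoint ivars (I : Index) : seq nat :=
  match I with
  | INat _ => [::]
  | IVar i => [:: i]
  | IAdd a b | ISub a b | IMul a b | IMax a b => ivars a ++ ivars b
  | IId _ _ => [::]
  | IAppend _ a b e f => ivars a ++ ivars b ++ ivars e ++ ivars f
  | IGate _ _ l => flatten (map ivars l)
  end.

Record CMI := {
  cid : nat -> nat -> nat;                    (* id_c(W), W = (#Bit, #Qubit) *)
  capp : G -> nat -> nat -> nat -> nat -> nat;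
  cgate : G -> nat -> seq nat -> nat
}.

Section Eval.
Variables (c : CMI) (rho : nat -> nat).
Fixpoint ieval (I : Index) : nat :=
  match I with
  | INat n => n
  | IVar i => rho i
  | IAdd a b => ieval a + ieval b
  | ISub a b => ieval a - ieval b
  | IMul a b => ieval a * ieval b
  | IMax a b => maxn (ieval a) (ieval b)
  | IId nb nq => cid c nb nq
  | IAppend g a b e f => capp c g (ieval a) (ieval b) (ieval e) (ieval f)
  | IGate g n l => cgate c g n (map ieval l)
  end.
End Eval.

Definition ieq (c : CMI) (I J : Index) : Prop :=
  forall rho : nat -> nat, ieval c rho I = ieval c rho J.

(* Label contexts: lists of (label, (wire type, index)) with distinct labels,
   considered up to permutation. *)
Definition Ctx := seq (nat * (WT * Index)).

Definition ctx_ok (Q : Ctx) : Prop := List.NoDup (map fst Q).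

Definition ctx_in (Xi : seq nat) (Q : Ctx) : Prop :=
  forall l w I, List.In (l, (w, I)) Q -> forall i, i \in ivars I -> i \in Xi.

Definition ctxW (Q : Ctx) : Index :=
  IId (count (fun p => WT_eqb p.2.1 Bit) Q) (count (fun p => WT_eqb p.2.1 Qubit) Q).

Inductive Bundle := BUnit | BLabel (l : nat) | BPair (b1 b2 : Bundle).

Fixpoint FL (b : Bundle) : seq nat :=
  match b with BUnit => [::] | BLabel l => [:: l] | BPair a b => FL a ++ FL b end.

Inductive BType := TUnit | TWire (w : WT) (I : Index) | TTensor (T U : BType).

Fixpoint inst (s : gshape) (f : nat -> Index) : BType :=
  match s with
  | SUnit => TUnit
  | SWire w => TWire w (f 0)
  | STensor a b => TTensor (inst a f) (inst b (fun j => f (nleaves a + j)))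
  end.

Definition inst_in (g : G) (delta : nat -> Index) : BType := inst (gin g) delta.
Definition inst_out (g : G) (delta : nat -> Index) : BType :=
  inst (gout g) (fun j => IGate g j (map delta (iota 0 (nleaves (gin g))))).

Inductive btyping (c : CMI) : Ctx -> Bundle -> BType -> Prop :=
| BT_unit : btyping c [::] BUnit TUnit
| BT_label l w I J : ieq c I J -> btyping c [:: (l, (w, I))] (BLabel l) (TWire w J)
| BT_pair Q Q1 Q2 b1 b2 T U :
    btyping c Q1 b1 T -> btyping c Q2 b2 U ->
    List.NoDup (map fst (Q1 ++ Q2)) -> Permutation Q (Q1 ++ Q2) ->
    btyping c Q (BPair b1 b2) (TTensor T U).

Inductive Circ := CId (Q : Ctx) | CApp (C : Circ) (g : G) (l k : Bundle).

Inductive racs (c : CMI) (Xi : seq nat) : Ctx -> Circ -> Ctx -> Index -> Prop :=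
| R_id Q I : ctx_in Xi Q -> ctx_ok Q -> ieq c (ctxW Q) I -> racs c Xi Q (CId Q) Q I
| R_append Q C O L H K I J g delta l k :
    racs c Xi Q C O I ->
    Permutation O (L ++ H) ->
    ieq c (IAppend g I (ctxW L) (ctxW H) (ctxW K)) J ->
    (forall j, j < nleaves (gin g) -> forall i, i \in ivars (delta j) -> i \in Xi) ->
    btyping c H l (inst_in g delta) ->
    btyping c K k (inst_out g delta) ->
    ctx_ok (L ++ K) ->
    racs c Xi Q (CApp C g l k) (L ++ K) J.

Fixpoint out (C : Circ) : seq nat :=
  match C with
  | CId Q => map fst Q
  | CApp C _ l k => [seq x <- out C | x \notin FL l] ++ FL k
  end.

Definition card_out (C : Circ) : nat := size (undup (out C)).

Fixpoint gatecount (C : Circ) : nat :=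
  match C with CId _ => 0 | CApp C _ _ _ => (gatecount C).+1 end.

Fixpoint width (C : Circ) : Z :=
  match C with
  | CId Q => Z.of_nat (size (undup (map fst Q)))
  | CApp C _ l k =>
      (width C + Z.max 0 ((Z.of_nat (size (FL k)) - Z.of_nat (size (FL l)))
                           - (width C - Z.of_nat (card_out C))))%Z
  end.

Fixpoint depth (C : Circ) (inp : nat -> nat) (t : nat) : nat :=
  match C with
  | CId _ => inp t
  | CApp C _ l k =>
      if t \in FL k then (foldr maxn 0 (map (depth C inp) (FL l))).+1
      else depth C inp t
  end.

End RACS.

Definition cmi_gatecount (G : Type) (cg : G -> nat -> nat) : CMI G :=
  {| cid := fun _ _ => 0;
     capp := fun _ n _ _ _ => n + 1;
     cgate := fun g n _ => cg g n |}.

Definition cmi_width (G : Type) (cg : G -> nat -> nat) : CMI G :=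
  {| cid := fun nb nq => nb + nq;
     capp := fun _ n l _ k => n + maxn 0 (k + l - n);
     cgate := fun g n _ => cg g n |}.

Definition cmi_depth (G : Type) (ci : nat -> nat -> nat) (ca : G -> nat) : CMI G :=
  {| cid := ci;
     capp := fun g _ _ _ _ => ca g;
     cgate := fun _ _ ns => (foldr maxn 0 ns).+1 |}.

From Stdlib Require Import Permutation ZArith Lia.
From mathcomp Require Import all_boot zify.

Set Implicit Arguments.
Unset Strict Implicit.
Unset Printing Implicit Defensive.

(* Gate count:
   the index grows by one at each append, like the circuit.  Width: the bundle
   typings make the wires of [g(l) -> k] exactly the labels of the contexts H
   and K, and the derivation keeps the output context duplicate-free with
   labels [out C]; hence [discarded C = width C - |L| - |H|], the width step
   becomes [max (width C) (|L| + |K|)], and this is what [append_c] computes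
   from [I] and [|L| + |K|].  Depth: an output of [g] gets the index
   [max_j delta(i_j) + 1], and each [delta(i_j)] bounds, by induction, the
   depth of the corresponding input wire. *)

Lemma in_seqP (T : eqType) (x : T) (s : seq T) : reflect (List.In x s) (x \in s).
Proof.
apply: (iffP idP); elim: s => //= y s IH; rewrite inE.
- by case/orP=> [/eqP ->|/IH]; auto.
- by case=> [->|/IH ->]; rewrite ?eqxx ?orbT.
Qed.

Lemma NoDup_uniq (T : eqType) (s : seq T) : List.NoDup s -> uniq s.
Proof. by elim=> //= x l xNl _ ->; rewrite andbT; apply: contra_notN xNl => /in_seqP. Qed.

Lemma Permutation_perm_eq (T : eqType) (s t : seq T) : Permutation s t -> perm_eq s t.
Proof.
elim=> //= [x l l' _|x y l|l l' l'' _ h1 _]; first by rewrite perm_cons.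
- by apply/permP => p /=; rewrite addnCA.
- exact: perm_trans.
Qed.

Lemma In_map_fst (A : Type) (x : nat) (a : A) (s : seq (nat * A)) :
  List.In (x, a) s -> x \in map fst s.
Proof. by move=> xs; apply/in_seqP; apply: (List.in_map fst _ (x, a)). Qed.

Lemma map_fst_In (A : Type) (x : nat) (s : seq (nat * A)) :
  x \in map fst s -> exists a, List.In (x, a) s.
Proof. by case/in_seqP/List.in_map_iff => -[y a] /= [<-]; exists a. Qed.

Lemma foldr_maxn_bigmax (s : seq nat) : foldr maxn 0 s = \max_(x <- s) x.
Proof. by rewrite unlock. Qed.

Section Bundles.
Variables (G : Type) (c : CMI G).

Lemma btyping_FL Q b T : btyping c Q b T -> perm_eq (FL b) (map fst Q).
Proof.
move=> bt; apply: Permutation_perm_eq.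
elim: bt => //= Q' Q1 Q2 b1 b2 T1 T2 _ P1 _ P2 _ PQ.
apply: Permutation_trans (Permutation_app P1 P2) _.
rewrite -List.map_app; exact/Permutation_map/Permutation_sym.
Qed.

Lemma btyping_inst Q b s f x w I : btyping c Q b (inst s f) ->
  List.In (x, (w, I)) Q -> exists2 j, j < nleaves s & ieq c I (f j).
Proof.
move eS: (inst s f) => S bt; elim: bt s f eS => //.
- move=> l w' I' J eqIJ [] //= w'' f [_ eJ] [[_ _ <-]|] //.
  by exists 0; rewrite // eJ.
move=> Q12 Q1 Q2 b1 b2 T1 T2 _ IH1 _ IH2 _ PQ [] //= s1 s2 f [eT eU].
move=> /(Permutation_in _ PQ) xQ; case: (List.in_app_or _ _ _ xQ) => {}xQ.
- by have [j jlt eqI] := IH1 _ _ eT xQ; exists j => //; lia.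
- by have [j jlt eqI] := IH2 _ _ eU xQ; exists (nleaves s1 + j) => //; lia.
Qed.

Lemma btyping_bigmax_le Q b s f rho (d : nat -> nat) :
  btyping c Q b (inst s f) ->
  (forall y w I, List.In (y, (w, I)) Q -> d y <= ieval c rho I) ->
  \max_(y <- FL b) d y <= \max_(j <- iota 0 (nleaves s)) ieval c rho (f j).
Proof.
move=> bt dQ; apply/bigmax_leqP_seq => y + _.
rewrite (perm_mem (btyping_FL bt)) => /map_fst_In [[w I] yQ].
have [j jlt eqI] := btyping_inst bt yQ.
apply: leq_trans (dQ _ _ _ yQ) _; rewrite eqI.
by apply: (leq_bigmax_seq j) => //; rewrite mem_iota.
Qed.

End Bundles.

Section Derivations.
Variables (G : Type) (gin gout : G -> gshape).

Lemma racs_uniq c Xi Q C O I : racs gin gout c Xi Q C O I -> uniq (map fst O).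
Proof. by case=> *; apply: NoDup_uniq. Qed.

Lemma racs_out c Xi Q C O I : racs gin gout c Xi Q C O I -> out C =i map fst O.
Proof.
elim=> // {}Q {}C {}O L H K {}I J g delta l k R IH PO _ _ Hl Hk _ x /=.
have PO' : perm_eq (map fst O) (map fst L ++ map fst H).
  by rewrite -map_cat; exact/Permutation_perm_eq/Permutation_map.
have := racs_uniq R; rewrite (perm_uniq PO') cat_uniq => /and3P [_ LdisjH _].
rewrite map_cat !mem_cat mem_filter IH (perm_mem PO') mem_cat.
rewrite (perm_mem (btyping_FL Hl)) (perm_mem (btyping_FL Hk)).
case xL: (x \in map fst L); case xH: (x \in map fst H) => //=.
by move/hasPn: LdisjH => /(_ _ xH); rewrite xL.
Qed.

Lemma racs_card_out c Xi Q C O I : racs gin gout c Xi Q C O I -> card_out C = size O.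
Proof.
move=> R; rewrite /card_out -(size_map fst O); apply/perm_size/uniq_perm.
- exact: undup_uniq.
- exact: racs_uniq R.
- by move=> x; rewrite mem_undup (racs_out R).
Qed.

Lemma racs_gatecount cg Xi Q C O I rho :
  racs gin gout (cmi_gatecount cg) Xi Q C O I ->
  gatecount C <= ieval (cmi_gatecount cg) rho I.
Proof. by elim=> // {}Q {}C {}O L H K {}I J g delta l k _ IH _ <- /=; rewrite addn1. Qed.

Lemma ieval_width_ctxW cg rho (Q : Ctx G) :
  ieval (cmi_width cg) rho (ctxW Q) = size Q.
Proof. by elim: Q => //= -[x [[] I]] Q /= <-; lia. Qed.

Lemma ieval_width_append cg rho g I (L H K : Ctx G) :
  ieval (cmi_width cg) rho (IAppend g I (ctxW L) (ctxW H) (ctxW K)) =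
  maxn (ieval (cmi_width cg) rho I) (size L + size K).
Proof.
by move: (ieval_width_ctxW cg rho L) (ieval_width_ctxW cg rho K) => /= -> ->; lia.
Qed.

Lemma racs_width cg Xi Q C O I rho :
  racs gin gout (cmi_width cg) Xi Q C O I ->
  (width C <= Z.of_nat (ieval (cmi_width cg) rho I))%Z.
Proof.
elim=> {Q C O I} [Q I _ ok <-|Q C O L H K I J g delta l k R IH PO <- _ Hl Hk _].
  by rewrite ieval_width_ctxW /= undup_id ?size_map; [lia | apply: NoDup_uniq].
rewrite ieval_width_append /= (racs_card_out R).
rewrite (perm_size (btyping_FL Hl)) (perm_size (btyping_FL Hk)) !size_map.
have sizeO : size O = size L + size H by rewrite -size_cat; apply: Permutation_length.
lia.
Qed.

Lemma ieval_inst_out_depth ci ca rho g delta j :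
  ieval (cmi_depth ci ca) rho (IGate g j (map delta (iota 0 (nleaves (gin g))))) =
  (\max_(i <- iota 0 (nleaves (gin g))) ieval (cmi_depth ci ca) rho (delta i)).+1.
Proof. by rewrite /= foldr_maxn_bigmax -map_comp big_map. Qed.

Lemma racs_depth ci ca Xi Q C O J rho f :
  racs gin gout (cmi_depth ci ca) Xi Q C O J ->
  (forall t r I, List.In (t, (r, I)) Q -> f t <= ieval (cmi_depth ci ca) rho I) ->
  forall t r I, List.In (t, (r, I)) O -> depth C f t <= ieval (cmi_depth ci ca) rho I.
Proof.
elim=> {Q C O J} [Q I _ _ _ fQ t r I' /fQ //|].
move=> Q C O L H K I J g delta l k _ IH PO _ _ Hl Hk ok /IH {}IH.
have inO p : List.In p L \/ List.In p H -> List.In p O.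
  by move=> pLH; apply: Permutation_in (Permutation_sym PO) (List.in_or_app _ _ _ pLH).
have := NoDup_uniq ok; rewrite map_cat cat_uniq => /and3P [_ LdisjK _].
move=> t r I' /= tLK; rewrite (perm_mem (btyping_FL Hk)).
case: ifP => tK; case: (List.in_app_or _ _ _ tLK) => [tL|tK'].
- by move/hasPn: LdisjK => /(_ _ tK); rewrite (In_map_fst tL).
- have [j _ ->] := btyping_inst Hk tK'.
  rewrite ieval_inst_out_depth ltnS foldr_maxn_bigmax big_map.
  apply: btyping_bigmax_le Hl _ => y w I'' yH.
  by apply: (IH _ w); apply: inO; right.
- by apply: (IH _ r); apply: inO; left.
- by rewrite (In_map_fst tK') in tK.
Qed.

End Derivations.

Theorem mainTheorem1 (G : Type) (gin gout : G -> gshape) :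
  (* (1) gate count *)
  (forall (cg : G -> nat -> nat) (Xi : seq nat) (Q : Ctx G) (C : Circ G)
          (L : Ctx G) (I : Index G),
      racs gin gout (cmi_gatecount cg) Xi Q C L I ->
      forall rho : nat -> nat, gatecount C <= ieval (cmi_gatecount cg) rho I) /\
  (* (2) width *)
  (forall (cg : G -> nat -> nat) (Xi : seq nat) (Q : Ctx G) (C : Circ G)
          (L : Ctx G) (I : Index G),
      racs gin gout (cmi_width cg) Xi Q C L I ->
      forall rho : nat -> nat,
        (width C <= Z.of_nat (ieval (cmi_width cg) rho I))%Z) /\
  (* (3) depth *)
  (forall (ci : nat -> nat -> nat) (ca : G -> nat) (Xi : seq nat)
          (Qin : seq (nat * (WT * nat))) (C : Circ G) (L : Ctx G) (J : Index G),
      List.NoDup (map (fun p => p.2.2) Qin) ->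
      (forall p, List.In p Qin -> p.2.2 \in Xi) ->
      racs gin gout (cmi_depth ci ca) Xi
           (map (fun p => (p.1, (p.2.1, IVar G p.2.2))) Qin) C L J ->
      forall (k : nat) (r : WT) (Ij : Index G), List.In (k, (r, Ij)) L ->
      forall (rho : nat -> nat) (f : nat -> nat),
        (forall p, List.In p Qin -> f p.1 = rho p.2.2) ->
        depth C f k <= ieval (cmi_depth ci ca) rho Ij).
Proof.
split; [|split].
- by move=> cg Xi Q C L I R rho; apply: racs_gatecount R.
- by move=> cg Xi Q C L I R rho; apply: racs_width R.
- move=> ci ca Xi Qin C L J _ _ R k r Ij kL rho f fQin.
  apply: (racs_depth R _ kL) => t r' I /List.in_map_iff [p [[<- _ <-] pQin]] /=.
  by rewrite fQin.
Qed.
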